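(* Let $G$ be a graph. Then \[\chi(G) \leq \frac{1}{2} (\omega(G) + \Delta(G) + 1) + \frac{\delta(\overline{G}) - \eta(G)}{4}.\]
   Context: All graphs are finite and simple with non-empty vertex set. $\chi$ is the chromatic number, $\omega$ the clique number, $\Delta$ the maximum degree; $\overline{G}$ is the complement of $G$ and $\delta(\overline{G})$ its minimum degree. The chromatic excess of $G$ is $\eta(G) = \max_{H} \left(|H| - 3\chi(H)\right)$, where the maximum ranges over all induced subgraphs $H$ of $G$ with non-empty vertex set and $|H|$ is the number of vertices of $H$. *)

(* A simple graph = symmetric irreflexive relation e on a finType T. *)
From mathcomp Require Import all_boot all_order all_algebra.
Set Implicit Arguments. Unset Strict Implicit. Unset Printing Implicit Defensive.
Import Order.TTheory GRing.Theory Num.Theory.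

Section Graph.
Variables (T : finType) (e : rel T).

Definition colourable (S : {set T}) (k : nat) : bool :=
  [exists f : {ffun T -> 'I_k},
     [forall x in S, forall y in S, e x y ==> (f x != f y)]].

(* chromatic number of the subgraph induced on S: least k <= #|T| such that
   S is k-colourable (for a simple graph S is always #|T|-colourable, so this
   is the true minimum). *)
Definition chi_on (S : {set T}) : nat :=
  \big[minn/#|T|]_(k < #|T|.+1 | colourable S k) (k : nat).

Definition chi : nat := chi_on [set: T].

Definition is_clique (S : {set T}) : bool :=
  [forall x in S, forall y in S, (x != y) ==> e x y].

Definition omega : nat := \max_(S : {set T} | is_clique S) #|S|.

Definition Delta : nat := \max_(x : T) #|[set y | e x y]|.

Definition delta_compl : nat :=
  \big[minn/#|T|]_(x : T) #|[set y | (y != x) && ~~ e x y]|.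

(* chromatic excess: max over non-empty induced subgraphs H of |H| - 3 chi(H).
   The seed -3|T| is below every value |S| - 3 chi(S) >= -2|S| when T is
   non-empty, so it does not affect the maximum. *)
Definition eta : int :=
  \big[Num.max/(- (3 * #|T|)%:Z)%R]_(S : {set T} | S != set0)
     ((#|S|%:Z) - ((3 * chi_on S)%:Z))%R.

End Graph.

From mathcomp Require Import all_boot all_order all_algebra.
From mathcomp Require Import zify lra.
Set Implicit Arguments. Unset Strict Implicit. Unset Printing Implicit Defensive.
Import Order.TTheory GRing.Theory Num.Theory.

(* For H contained in a vertex set S we show
     4 chi(S) <= |S \ H| + 3 chi(H) + 2 omega(S) + Delta(S) + 1
   by induction on |S|.  If H is non-empty, let C be a colour class of an optimal colouring
   of H; if H is empty and S contains a stable set C of size 3, take that.  Extending C to a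
   maximal stable set I of S and deleting I lowers chi(S) by at most 1 and Delta(S) by at
   least 1, while it deletes a colour of H or three vertices outside H.  Otherwise S has no
   stable triple, so a minimum colouring has classes of size at most 2 and 2 chi(S) is at
   most |S| plus the number of singleton classes.  The singletons form a clique, and
   recolouring arguments with the partners of the non-neighbours of a singleton v give
   2 #singletons + #non-neighbours(v) <= 2 omega(S), which yields the bound.
   With S = T, the estimate |T| <= delta(complement) + Delta + 1 turns it into
   eta <= 2 omega + 2 Delta + 2 + delta(complement) - 4 chi. *)

Section InducedSubgraphs.
Variables (T : finType) (e : rel T).
Hypotheses (e_sym : symmetric e) (e_irr : irreflexive e).
Implicit Types (S H C A B I : {set T}) (x y v : T).

Definition proper_on (X : Type) (S : {set T}) (f : T -> X) :=
  forall x y, x \in S -> y \in S -> e x y -> f x <> f y.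

Definition stable C := [forall x in C, forall y in C, ~~ e x y].

Lemma stableP C : reflect (forall x y, x \in C -> y \in C -> ~~ e x y) (stable C).
Proof.
apply: (iffP forallP) => [h x y xC yC | h x].
  by move/implyP: (h x) => /(_ xC) /forallP /(_ y) /implyP; apply.
by apply/implyP => xC; apply/forallP => y; apply/implyP; apply: h.
Qed.

Lemma cliqueP C : reflect (forall x y, x \in C -> y \in C -> x != y -> e x y) (is_clique e C).
Proof.
apply: (iffP forallP) => [h x y xC yC | h x].
  by move/implyP: (h x) => /(_ xC) /forallP /(_ y) /implyP /(_ yC) /implyP.
apply/implyP => xC; apply/forallP => y; apply/implyP => yC; apply/implyP; exact: h.
Qed.

(* [chi_on e set0] is 1 rather than 0: no map [T -> 'I_0] exists. *)
Definition chrom (S : {set T}) : nat := if S == set0 then 0 else chi_on e S.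

Lemma chi_on_le_card S : chi_on e S <= #|T|.
Proof.
rewrite /chi_on; elim/big_ind: _ => // [a b ha hb | i _].
  by rewrite geq_min ha.
by rewrite -ltnS.
Qed.

Lemma chi_on_colouring S :
  exists2 f : T -> nat, proper_on S f & forall x, x \in S -> f x < chi_on e S.
Proof.
rewrite /chi_on; elim/big_ind: _ => [| m1 m2 [f1 p1 b1] [f2 p2 b2] | k /existsP [f /forallP Hf]].
- exists (fun x => val (enum_rank x)) => [x y _ _ exy /val_inj /enum_rank_inj exy'|x _].
    by rewrite exy' e_irr in exy.
  exact: ltn_ord.
- case: (leqP m1 m2) => h.
    by exists f1 => // x xS; rewrite (minn_idPl h); exact: b1.
  by exists f2 => // x xS; rewrite (minn_idPr (ltnW h)); exact: b2.
- exists (fun x => val (f x)) => [x y xS yS exy /val_inj fxy | x _]; last exact: ltn_ord.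
  by move: (Hf x); rewrite xS /= => /forallP /(_ y); rewrite yS exy fxy eqxx.
Qed.

Lemma chrom_colouring S :
  exists2 f : T -> nat, proper_on S f & forall x, x \in S -> f x < chrom S.
Proof.
rewrite /chrom; case: eqP => [->|_]; last exact: chi_on_colouring.
by exists (fun _ => 0) => // x; rewrite inE.
Qed.

Lemma chi_on_min S k : colourable e S k -> chi_on e S <= k.
Proof.
move=> Sk; case: (leqP k #|T|) => [kT|/ltnW Tk]; last exact: leq_trans (chi_on_le_card S) Tk.
have : Ordinal (kT : k < #|T|.+1) \in index_enum 'I_#|T|.+1 by rewrite mem_index_enum.
rewrite /chi_on; elim: (index_enum _) => //= i r IHr.
rewrite big_cons inE => /predU1P[<- | /IHr ih]; first by rewrite Sk geq_minl.
by case: ifP => // _; rewrite geq_min ih orbT.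
Qed.

Lemma chrom_min S k (f : T -> nat) :
  proper_on S f -> (forall x, x \in S -> f x < k) -> chrom S <= k.
Proof.
move=> pf bf; rewrite /chrom; case: eqP => // /eqP /set0Pn [x0 x0S].
case: k bf => [|k] bf; first by have := bf _ x0S.
apply: chi_on_min; apply/existsP; exists [ffun x => inord (f x)].
apply/forallP => x; apply/implyP => xS; apply/forallP => y; apply/implyP => yS.
apply/implyP => exy; rewrite !ffunE; apply/negP => /eqP /(congr1 val) /=.
by rewrite !inordK ?bf //; exact: pf.
Qed.

Lemma chromS A B : A \subset B -> chrom A <= chrom B.
Proof.
move=> /subsetP AB; have [f pf bf] := chrom_colouring B.
by apply: (chrom_min (f := f)) => [x y /AB xB /AB yB | x /AB]; [apply: pf | apply: bf].
Qed.

Lemma chrom_imset (X : finType) S (f : T -> X) : proper_on S f -> chrom S <= #|f @: S|.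
Proof.
move=> pf; pose c x := index (f x) (enum (f @: S)).
have fS x : x \in S -> f x \in enum (f @: S) by move=> xS; rewrite mem_enum imset_f.
apply: (chrom_min (f := c)) => [x y xS yS exy cxy | x xS].
  apply: (pf x y xS yS exy); move: cxy => /(congr1 (nth (f x) (enum (f @: S)))).
  by rewrite !nth_index ?fS.
by rewrite cardE index_mem fS.
Qed.

Definition clique_num (S : {set T}) : nat :=
  \max_(C : {set T} | (C \subset S) && is_clique e C) #|C|.

Definition max_deg (S : {set T}) : nat := \max_(x in S) #|[set y in S | e x y]|.

Definition nonnbrs (S : {set T}) (v : T) : {set T} := [set y in S | (y != v) && ~~ e v y].

Lemma nonnbrs_sub S v : nonnbrs S v \subset S.
Proof. by apply/subsetP => y; rewrite inE => /andP[]. Qed.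

Lemma clique_num_max C S : C \subset S -> is_clique e C -> #|C| <= clique_num S.
Proof. by move=> CS cC; apply: (leq_bigmax_cond C); rewrite CS. Qed.

Lemma clique_numS A B : A \subset B -> clique_num A <= clique_num B.
Proof.
move=> AB; apply/bigmax_leqP => C /andP [CA cC].
exact: clique_num_max (subset_trans CA AB) cC.
Qed.

Lemma max_deg_max S x : x \in S -> #|[set y in S | e x y]| <= max_deg S.
Proof. exact: (leq_bigmax_cond x). Qed.

Lemma card_nbrs_nonnbrs S v :
  v \in S -> #|S| = 1 + #|[set y in S | e v y]| + #|nonnbrs S v|.
Proof.
move=> vS; rewrite -(cardsID [set y | e v y] S).
have -> : S :&: [set y | e v y] = [set y in S | e v y] by apply/setP => y; rewrite !inE.
have vD : v \in S :\: [set y | e v y] by rewrite !inE e_irr vS.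
rewrite (cardsD1 v (S :\: _)) vD.
have -> : (S :\: [set y | e v y]) :\ v = nonnbrs S v.
  by apply/setP => y; rewrite !inE; case: (y \in S); rewrite ?andbT ?andbF.
by rewrite addnCA addnA.
Qed.

Definition min_colouring (S : {set T}) (f : T -> T) :=
  proper_on S f /\ forall g : T -> T, proper_on S g -> #|f @: S| <= #|g @: S|.

Lemma exists_min_colouring S : exists f, min_colouring S f.
Proof.
pose P (g : {ffun T -> T}) := [forall x in S, forall y in S, e x y ==> (g x != g y)].
have properP (g : T -> T) : reflect (proper_on S g) (P [ffun x => g x]).
  apply: (iffP forallP) => [h x y xS yS exy | h x].
    by move/implyP: (h x) => /(_ xS) /forallP /(_ y); rewrite yS exy !ffunE => /eqP.
  apply/implyP => xS; apply/forallP => y; apply/implyP => yS; apply/implyP => exy.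
  by rewrite !ffunE; apply/eqP; exact: h.
have P0 : P [ffun x => x] by apply/properP => x y _ _ exy exy'; rewrite exy' e_irr in exy.
case: (arg_minnP (fun g : {ffun T -> T} => #|g @: S|) P0) => f Pf fmin.
exists f; split => [|g /properP/fmin]; first by apply/properP; rewrite ffunK.
by rewrite (eq_imset _ (ffunE _)).
Qed.

Lemma min_colouring_sub S (f g : T -> T) :
  min_colouring S f -> proper_on S g -> g @: S \subset f @: S -> min_colouring S g.
Proof. by move=> [_ fmin] pg /subset_leq_card gf; split=> // h /fmin; exact: leq_trans. Qed.

Definition alone (S : {set T}) (f : T -> T) x := [forall y in S, (f y == f x) ==> (y == x)].

Lemma aloneP S (f : T -> T) x : reflect (forall y, y \in S -> f y = f x -> y = x) (alone S f x).
Proof.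
apply: (iffP forallP) => [h y yS /eqP fy | h y].
  by move/implyP: (h y) => /(_ yS); rewrite fy => /eqP.
by apply/implyP => yS; apply/implyP => /eqP fy; apply/eqP; exact: h.
Qed.

Lemma card_colours_le S (f : T -> T) :
  2 * #|f @: S| <= #|S| + #|[set x in S | alone S f x]|.
Proof.
set U := [set x in S | alone S f x]; set D := S :\: U.
have US : U \subset S by apply/subsetP => x; rewrite inE => /andP[].
have cS : #|S| = #|U| + #|D| by rewrite -(cardsID U S) (setIidPr US) addnC.
have cfS : #|f @: S| <= #|f @: U| + #|f @: D|.
  have eS : S = U :|: D by rewrite -{1}(setID S U) (setIidPr US).
  by rewrite {1}eS imsetU; exact: leq_card_setU.
suff cfD : 2 * #|f @: D| <= #|D| by have := leq_imset_card f U; lia.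
rewrite mulnC -sum_nat_const -sum1_card [leqRHS](partition_big_imset f) /=.
apply: leq_sum => _ /imsetP [x0 x0D ->]; rewrite sum1dep_card.
have [x0S x0U] : x0 \in S /\ x0 \notin U by move: x0D; rewrite !inE => /andP[].
have /forallPn [y] : ~~ alone S f x0 by move: x0U; rewrite inE x0S.
rewrite !negb_imply => /andP [yS /andP [/eqP fy yx0]].
have yD : y \in D.
  rewrite in_setD yS andbT inE yS; apply/aloneP => /(_ x0 x0S (esym fy)) y_x0.
  by rewrite y_x0 eqxx in yx0.
have sub : [set x0; y] \subset [set x in D | f x == f x0].
  by apply/subsetP => z; rewrite in_set2 => /orP [] /eqP ->; rewrite inE ?x0D ?yD ?fy eqxx.
by apply: leq_trans (subset_leq_card sub); rewrite cards2 eq_sym yx0.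
Qed.

Definition recolour (f : T -> T) w c : T -> T := fun x => if x == w then c else f x.

Lemma recolour_proper S f w c : proper_on S f ->
  (forall y, y \in S -> e w y -> f y <> c) -> proper_on S (recolour f w c).
Proof.
move=> pf hc x y xS yS exy; rewrite /recolour.
case: eqVneq => [xw|_]; case: eqVneq => [yw|_].
- by rewrite xw yw e_irr in exy.
- by move/esym; apply: hc; rewrite -?xw.
- by apply: hc; rewrite -?yw 1?e_sym.
- exact: pf.
Qed.

Lemma min_colouring_recolour S f w c : min_colouring S f -> c \in f @: S ->
  (forall y, y \in S -> e w y -> f y <> c) -> min_colouring S (recolour f w c).
Proof.
move=> fmin cf hc; apply: min_colouring_sub fmin (recolour_proper fmin.1 hc) _.
apply/subsetP => _ /imsetP [x xS ->]; rewrite /recolour.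
by case: eqP => // _; exact: imset_f.
Qed.

Lemma alone_recolour S f w c x : x != w -> c != f x ->
  (forall y, y \in S -> y != w -> f y = f x -> y = x) -> alone S (recolour f w c) x.
Proof.
move=> xw cx h; apply/aloneP => y yS; rewrite /recolour (negbTE xw).
by case: eqVneq => [_ /eqP|yw]; [rewrite (negbTE cx) | exact: h].
Qed.

Lemma min_colouring_alone_adj S f u1 u2 : min_colouring S f ->
  u1 \in S -> u2 \in S -> u1 != u2 -> alone S f u1 -> alone S f u2 -> e u1 u2.
Proof.
move=> [pf fmin] u1S u2S u12 /aloneP a1 /aloneP a2; apply: contraT => nu12.
pose g := recolour f u1 (f u2).
have pg : proper_on S g.
  by apply: recolour_proper => // y yS u1y /a2 yu2; rewrite -yu2 // u1y in nu12.
have : g @: S \subset f @: S :\ f u1.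
  apply/subsetP => _ /imsetP [x xS ->]; rewrite /g /recolour !inE.
  case: (eqVneq x u1) => [_|xu1]; rewrite imset_f // andbT; apply/eqP.
    by move/a1 => /(_ u2S) u21; rewrite u21 eqxx in u12.
  by move/a1 => /(_ xS) xu1'; rewrite xu1' eqxx in xu1.
move/subset_leq_card => gf; have := fmin g pg.
by rewrite (cardsD1 (f u1) (f @: S)) imset_f //=; lia.
Qed.

Section StabilityTwo.
Variables (S : {set T}) (f : T -> T).
Hypothesis small_stable : forall C, C \subset S -> stable C -> #|C| <= 2.
Hypothesis f_min : min_colouring S f.

Lemma stable_triple x y z : x \in S -> y \in S -> z \in S ->
  ~~ e x y -> ~~ e y z -> ~~ e x z -> [\/ x = y, y = z | x = z].
Proof.
move=> xS yS zS nxy nyz nxz.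
case: (eqVneq x y) => [|xy]; first by constructor 1.
case: (eqVneq y z) => [|yz]; first by constructor 2.
case: (eqVneq x z) => [|xz]; first by constructor 3.
have : #|[set x; y; z]| <= 2.
  apply: small_stable; first by apply/subsetP => a; rewrite !inE => /orP [/orP [] | ] /eqP ->.
  apply/stableP => a b; rewrite !inE => /orP [/orP [] | ] /eqP -> /orP [/orP [] | ] /eqP ->;
    by rewrite ?e_irr // e_sym.
by rewrite -setUA cardsU1 cards2 !inE negb_or xy xz yz.
Qed.

Lemma same_colour_nonadj x y : x \in S -> y \in S -> f x = f y -> ~~ e x y.
Proof. by move=> xS yS fxy; apply/negP => exy; exact: f_min.1 x y xS yS exy fxy. Qed.

Lemma colour_class_le2 x y z : x \in S -> y \in S -> z \in S ->
  f x = f z -> f y = f z -> x != z -> y != z -> x = y.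
Proof.
move=> xS yS zS fxz fyz xz yz.
have [] // := stable_triple xS yS zS (same_colour_nonadj xS yS (etrans fxz (esym fyz)))
  (same_colour_nonadj yS zS fyz) (same_colour_nonadj xS zS fxz).
  by move=> yz'; rewrite yz' eqxx in yz.
by move=> xz'; rewrite xz' eqxx in xz.
Qed.

Definition singles := [set x in S | alone S f x].

Lemma singles_clique x y : x \in singles -> y \in singles -> x != y -> e x y.
Proof.
by rewrite !inE => /andP [xS ax] /andP [yS ay] xy; apply: (min_colouring_alone_adj f_min).
Qed.

Lemma nonnbrs_clique v : v \in S -> is_clique e (nonnbrs S v).
Proof.
move=> vS; apply/cliqueP => x y; rewrite !inE => /and3P [xS xv vx] /and3P [yS yv vy] xy.
apply: contraT => nxy; have [] := stable_triple vS xS yS vx nxy vy.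
- by move=> vx'; rewrite vx' eqxx in xv.
- by move=> xy'; rewrite xy' eqxx in xy.
- by move=> vy'; rewrite vy' eqxx in yv.
Qed.

Definition partner w := odflt w [pick y in S | (y != w) && (f y == f w)].

Lemma partnerP w : w \in S -> w \notin singles ->
  [/\ partner w \in S, partner w != w & f (partner w) = f w].
Proof.
rewrite inE => wS; rewrite wS => /forallPn [y].
rewrite !negb_imply => /andP [yS /andP [/eqP fy yw]].
rewrite /partner; case: pickP => [z /and3P [zS zw /eqP fz] | /(_ y)] //=.
by rewrite yS yw fy eqxx.
Qed.

Lemma partner_not_single w : w \in S -> w \notin singles -> partner w \notin singles.
Proof.
move=> wS wN; have [pS pw fp] := partnerP wS wN.
rewrite inE pS; apply/negP => /aloneP /(_ w wS (esym fp)) wp.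
by rewrite -wp eqxx in pw.
Qed.

Lemma singles_sub : singles \subset S.
Proof. by apply/subsetP => x; rewrite inE => /andP[]. Qed.

Section NonNeighboursOfSingle.
Variable u : T.
Hypothesis u_single : u \in singles.

Let N := nonnbrs S u.

Lemma colour_single x : x \in S -> f x = f u -> x = u.
Proof. by move: u_single; rewrite inE => /andP [_ /aloneP]; apply. Qed.

Lemma nonnbr_spec w : w \in N -> [/\ w \in S, w != u & ~~ e u w].
Proof. by rewrite inE => /and3P[]. Qed.

Lemma nonnbr_not_single w : w \in N -> w \notin singles.
Proof.
move=> /nonnbr_spec [_ wu uw]; apply/negP => w_single.
by rewrite (singles_clique u_single w_single) // eq_sym in uw.
Qed.

Lemma nonnbr_partner w : w \in N -> [/\ partner w \in S, partner w != w & f (partner w) = f w].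
Proof. by move=> wN; apply: partnerP; [case: (nonnbr_spec wN) | exact: nonnbr_not_single]. Qed.

Lemma partner_adj w : w \in N -> e u (partner w).
Proof.
move=> wN; have [wS wu uw] := nonnbr_spec wN; have [pS pw fp] := nonnbr_partner wN.
apply: contraT => nup; have uS := subsetP singles_sub _ u_single.
have [] := stable_triple uS wS pS uw (same_colour_nonadj wS pS (esym fp)) nup.
- by move=> uw'; rewrite uw' eqxx in wu.
- by move=> wp; rewrite -wp eqxx in pw.
- move=> up; have wu' := colour_single wS (esym (etrans (congr1 f up) fp)).
  by rewrite wu' eqxx in wu.
Qed.

Lemma partner_inj : {in N &, injective partner}.
Proof.
move=> w1 w2 w1N w2N p12.
have [p1S p1w f1] := nonnbr_partner w1N; have [p2S p2w f2] := nonnbr_partner w2N.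
have [w1S _ _] := nonnbr_spec w1N; have [w2S _ _] := nonnbr_spec w2N.
apply: (colour_class_le2 w1S w2S p1S); first by rewrite f1.
- by rewrite p12 f2.
- by rewrite eq_sym.
- by rewrite p12 eq_sym.
Qed.

Lemma recolour_nonnbr_min w : w \in N -> min_colouring S (recolour f w (f u)).
Proof.
move=> /nonnbr_spec [_ _ uw]; apply: min_colouring_recolour => //.
  exact: imset_f (subsetP singles_sub _ u_single).
by move=> y yS wy /(colour_single yS) yu; rewrite -yu e_sym wy in uw.
Qed.

Lemma single_alone_recolour w u2 : u2 \in singles -> u2 != u -> w \in N ->
  alone S (recolour f w (f u)) u2.
Proof.
move=> u2_single u2u wN; have [wS wu _] := nonnbr_spec wN.
have u2w : u2 != w by apply: contraNneq (nonnbr_not_single wN) => <-.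
move: u2_single; rewrite inE => /andP [u2S /aloneP a2].
apply: alone_recolour => // [|y yS _]; last exact: a2.
by apply: contra u2u => /eqP /esym /(colour_single u2S) ->.
Qed.

(* Giving [w] the colour of [u] leaves [partner w] alone in its class. *)
Lemma partner_adj_singles w u2 : w \in N -> u2 \in singles -> u2 != u -> e (partner w) u2.
Proof.
move=> wN u2_single u2u.
have [wS wu _] := nonnbr_spec wN; have [pS pw fp] := nonnbr_partner wN.
apply: (min_colouring_alone_adj (recolour_nonnbr_min wN) pS).
- exact: (subsetP singles_sub).
- by apply: contraNneq (partner_not_single wS (nonnbr_not_single wN)) => ->.
- apply: alone_recolour => // [|y yS yw fy].
    by apply: contra wu => /eqP; rewrite fp => /esym /(colour_single wS) ->.
  exact: (colour_class_le2 yS pS wS (etrans fy fp) fp yw pw).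
- exact: single_alone_recolour.
Qed.

(* If the partners of [w1] and [w2] are not adjacent, giving [w1] the colour of [u] and
   [partner w2] the old colour of [w1] leaves [w2] alone in its class. *)
Section ClashingPartners.
Variables w1 w2 : T.
Hypotheses (w1N : w1 \in N) (w2N : w2 \in N) (w12 : w1 != w2).
Hypothesis partners_nonadj : ~~ e (partner w1) (partner w2).

Lemma same_colour_w1 y : y \in S -> y != w1 -> f y = f w1 -> y = partner w1.
Proof.
have [w1S _ _] := nonnbr_spec w1N; have [p1S p1w1 f1] := nonnbr_partner w1N.
by move=> yS yw1 fy; apply: (colour_class_le2 yS p1S w1S).
Qed.

Definition swap_colouring := recolour (recolour f w1 (f u)) (partner w2) (f w1).

Lemma swap_colouring_min : min_colouring S swap_colouring.
Proof.
have [w1S w1u _] := nonnbr_spec w1N; have [p1S p1w1 f1] := nonnbr_partner w1N.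
apply: min_colouring_recolour (recolour_nonnbr_min w1N) _ _.
  by apply/imsetP; exists (partner w1); rewrite // /recolour (negbTE p1w1) f1.
move=> y yS p2y; rewrite /recolour; case: eqVneq => [_|yw1].
  by move=> /esym /(colour_single w1S) w1u'; rewrite w1u' eqxx in w1u.
move/(same_colour_w1 yS yw1) => yp1; move: partners_nonadj.
by rewrite -yp1 e_sym p2y.
Qed.

Lemma swap_colouring_alone_w2 : alone S swap_colouring w2.
Proof.
have [w2S w2u uw2] := nonnbr_spec w2N; have [p2S p2w2 f2] := nonnbr_partner w2N.
have w21 : w2 != w1 by rewrite eq_sym.
apply: alone_recolour; first by rewrite eq_sym.
  rewrite /recolour (negbTE w21); apply: contraTneq (partner_adj w1N) => fw12.
  by rewrite -(same_colour_w1 w2S w21 (esym fw12)).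
move=> y yS yp2; rewrite /recolour (negbTE w21); case: eqVneq => [_|yw1 fy].
  by move=> /esym /(colour_single w2S) w2u'; rewrite w2u' eqxx in w2u.
apply: contraNeq yp2 => yw2; apply/eqP.
exact: (colour_class_le2 yS p2S w2S fy f2 yw2 p2w2).
Qed.

Lemma swap_colouring_alone_single u2 : u2 \in singles -> u2 != u -> alone S swap_colouring u2.
Proof.
move=> u2_single u2u; have [w1S _ _] := nonnbr_spec w1N; have [w2S _ _] := nonnbr_spec w2N.
have u2w1 : u2 != w1 by apply: contraNneq (nonnbr_not_single w1N) => <-.
have /aloneP a2 := single_alone_recolour u2_single u2u w1N.
apply: alone_recolour => [|| y yS _]; last exact: a2.
  by apply: contraNneq (partner_not_single w2S (nonnbr_not_single w2N)) => <-.
rewrite /recolour (negbTE u2w1); apply: contra u2w1 => /eqP fw1.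
by move: u2_single; rewrite inE => /andP [_ /aloneP /(_ w1 w1S fw1) ->].
Qed.

Lemma adj_singles_of_partners_nonadj u2 : u2 \in singles -> u2 != u -> e w2 u2.
Proof.
move=> u2_single u2u; have [w2S _ _] := nonnbr_spec w2N.
apply: (min_colouring_alone_adj swap_colouring_min w2S).
- exact: (subsetP singles_sub).
- by apply: contraNneq (nonnbr_not_single w2N) => ->.
- exact: swap_colouring_alone_w2.
- exact: swap_colouring_alone_single.
Qed.

End ClashingPartners.

Lemma card_partners_singles (X : {set T}) : X \subset N ->
  {in X &, forall x y, x != y -> e (partner x) (partner y)} ->
  #|X| + #|singles| <= clique_num S.
Proof.
move=> /subsetP XN hX.
have disj : partner @: X :&: singles = set0.
  apply/setP => z; rewrite in_setI in_set0; apply/negP => /andP [/imsetP [x xX ->]].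
  have [xS _ _] := nonnbr_spec (XN x xX).
  exact/negP/partner_not_single/nonnbr_not_single/XN.
rewrite -(card_in_imset (sub_in2 XN partner_inj)) -cardsUI disj cards0 addn0.
apply: clique_num_max.
  apply/subsetP => z; rewrite in_setU => /orP [/imsetP [x xX ->]|/(subsetP singles_sub) //].
  by case: (nonnbr_partner (XN x xX)).
have p_single x y : x \in X -> y \in singles -> e (partner x) y.
  move=> xX y_single; case: (eqVneq y u) => [->|yu]; first by rewrite e_sym partner_adj ?XN.
  exact: partner_adj_singles (XN x xX) y_single yu.
apply/cliqueP => x y; rewrite !in_setU.
move=> /orP [/imsetP [x' x'X ->]|xU] /orP [/imsetP [y' y'X ->]|yU] xy.
- by apply: hX => //; apply: contraNneq xy => ->.
- exact: p_single.
- by rewrite e_sym p_single.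
- exact: singles_clique.
Qed.

Definition clashing :=
  [set w in N | [exists w1 in N, (w1 != w) && ~~ e (partner w1) (partner w)]].

Lemma clashing_sub : clashing \subset N.
Proof. by apply/subsetP => w; rewrite inE => /andP[]. Qed.

Lemma card_clashing_singles : #|clashing| + #|singles| <= (clique_num S).+1.
Proof.
have disj : clashing :&: (singles :\ u) = set0.
  apply/setP => z; rewrite in_setI in_setD1 in_set0; apply/negP => /and3P [zA _ z_single].
  by move: (nonnbr_not_single (subsetP clashing_sub z zA)); rewrite z_single.
suff : #|clashing :|: (singles :\ u)| <= clique_num S.
  have := cardsUI clashing (singles :\ u); have := cardsD1 u singles.
  by rewrite disj cards0 u_single; lia.
apply: clique_num_max.
  apply/subsetP => z; rewrite in_setU in_setD1 => /orP [/(subsetP clashing_sub)|/andP [_]].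
    by case/nonnbr_spec.
  exact: (subsetP singles_sub).
have clash_single x y : x \in clashing -> y \in singles :\ u -> e x y.
  rewrite inE in_setD1 => /andP [xN /existsP [w1 /and3P [w1N w1x np]]] /andP [yu y_single].
  exact: (adj_singles_of_partners_nonadj w1N xN w1x np y_single yu).
apply/cliqueP => x y; rewrite !in_setU => /orP [xA|xU] /orP [yA|yU] xy.
- have /cliqueP N_clique := nonnbrs_clique (subsetP singles_sub _ u_single).
  by apply: N_clique => //; exact: (subsetP clashing_sub).
- exact: clash_single.
- by rewrite e_sym clash_single.
- by move: xU yU; rewrite !in_setD1 => /andP [_ ?] /andP [_ ?]; exact: singles_clique.
Qed.

(* [clashing] plus the other singles is a clique, and so are all singles plus the partners
   of one clashing vertex and of the non-clashing ones; add the two bounds. *)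
Lemma nonnbrs_singles_bound : 2 * #|singles| + #|N| <= 2 * clique_num S.
Proof.
set B := N :\: clashing.
have cN : #|N| = #|clashing| + #|B| by rewrite -(cardsID clashing N) (setIidPr clashing_sub).
have BN : B \subset N := subsetDl N clashing.
have partners_adj w : w \in B -> {in N, forall w1, w1 != w -> e (partner w1) (partner w)}.
  rewrite in_setD => /andP [wA wN] w1 w1N w1w; apply: contraT => np.
  by move: wA; rewrite inE wN; case/negP; apply/existsP; exists w1; rewrite w1N w1w.
have hB : {in B &, forall x y, x != y -> e (partner x) (partner y)}.
  by move=> x y xB yB xy; apply: (partners_adj y yB x (subsetP BN x xB) xy).
have := card_clashing_singles.
have [A0|[a aA]] := set_0Vmem clashing.
  by have := card_partners_singles BN hB; rewrite cN A0 cards0; lia.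
have aB : a \notin B by rewrite in_setD aA.
have aN := subsetP clashing_sub a aA.
have : #|a |: B| + #|singles| <= clique_num S.
  apply: card_partners_singles.
    by apply/subsetP => z; rewrite in_setU1 => /orP [/eqP ->|/(subsetP BN)].
  move=> x y; rewrite !in_setU1 => /orP [/eqP ->|xB] /orP [/eqP ->|yB] xy.
  - by rewrite eqxx in xy.
  - by apply: (partners_adj y yB a aN); apply: contraNneq aB => ->.
  - by rewrite e_sym; apply: (partners_adj x xB a aN); apply: contraNneq aB => ->.
  - exact: hB.
by rewrite cardsU1 aB cN; lia.
Qed.

End NonNeighboursOfSingle.

Lemma exists_nonnbrs_singles_bound : S != set0 ->
  exists2 v, v \in S & 2 * #|singles| + #|nonnbrs S v| <= 2 * clique_num S.
Proof.
case/set0Pn => v0 v0S; have [U0|[u u_single]] := set_0Vmem singles.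
  exists v0 => //; rewrite U0 cards0.
  by have := clique_num_max (nonnbrs_sub S v0) (nonnbrs_clique v0S); lia.
by exists u; [exact: (subsetP singles_sub) | exact: nonnbrs_singles_bound].
Qed.

End StabilityTwo.

Lemma chrom_small_stable S : (forall C, C \subset S -> stable C -> #|C| <= 2) ->
  4 * chrom S <= #|S| + 2 * clique_num S + max_deg S + 1.
Proof.
move=> small_stable; have [->|Sne] := eqVneq S set0; first by rewrite /chrom eqxx.
have [f f_min] := exists_min_colouring S.
have [v vS bound_v] := exists_nonnbrs_singles_bound small_stable f_min Sne.
have := card_colours_le S f; have := chrom_imset f_min.1.
have := max_deg_max vS; have := card_nbrs_nonnbrs vS.
rewrite /singles in bound_v; lia.
Qed.

Lemma exists_maximal_stable S C : C \subset S -> stable C ->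
  exists I, [/\ C \subset I, I \subset S, stable I &
              forall v, v \in S -> v \notin I -> exists2 y, y \in I & e v y].
Proof.
move=> CS C_stable.
pose P I := [&& C \subset I, I \subset S & stable I].
have PC : P C by rewrite /P subxx CS.
case: (arg_maxnP (fun I => #|I|) PC) => I /and3P [CI IS /stableP I_stable] Imax.
exists I; split=> // [|v vS vI]; first exact/stableP.
have [/existsP [y /andP [yI vy]]|/existsPn nv] := boolP [exists y in I, e v y].
  by exists y.
have : P (v |: I).
  rewrite /P (subset_trans CI (subsetUr _ _)) subUset sub1set vS IS /=.
  apply/stableP => x y; rewrite !in_setU1.
  move=> /orP [/eqP ->|xI] /orP [/eqP ->|yI]; rewrite ?e_irr //.
  - by move: (nv y); rewrite yI.
  - by move: (nv x); rewrite xI e_sym.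
  - exact: I_stable.
by move/Imax; rewrite cardsU1 vI; lia.
Qed.

Lemma chrom_stable_setD S I : stable I -> chrom S <= (chrom (S :\: I)).+1.
Proof.
move=> /stableP I_stable; have [g pg bg] := chrom_colouring (S :\: I).
pose h x := if x \in I then chrom (S :\: I) else g x.
apply: (chrom_min (f := h)) => [x y xS yS exy|x xS]; rewrite /h.
  case: ifPn => xI; case: ifPn => yI.
  - by rewrite (negbTE (I_stable x y xI yI)) in exy.
  - by move=> h_eq; have := bg y; rewrite in_setD yI yS -h_eq ltnn => /(_ isT).
  - by move=> h_eq; have := bg x; rewrite in_setD xI xS h_eq ltnn => /(_ isT).
  - by apply: pg => //; rewrite in_setD ?xI ?yI.
by case: ifPn => // xI; apply: ltnW; apply: bg; rewrite in_setD xI.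
Qed.

Lemma max_deg_setD_dominating S I : I \subset S -> S :\: I != set0 ->
  (forall v, v \in S -> v \notin I -> exists2 y, y \in I & e v y) ->
  max_deg (S :\: I) < max_deg S.
Proof.
move=> /subsetP IS /set0Pn [x0 x0S'] dom.
have deg_lt x : x \in S :\: I -> #|[set y in S :\: I | e x y]| < max_deg S.
  rewrite in_setD => /andP [xI xS]; have [y yI xy] := dom x xS xI.
  apply: leq_trans (max_deg_max xS); apply: proper_card; apply/properP; split.
    by apply/subsetP => z; rewrite !inE => /andP [/andP [_ ->] ->].
  by exists y; rewrite !inE ?yI ?IS ?xy.
have := deg_lt x0 x0S'; have : max_deg (S :\: I) <= max_deg S - 1.
  by apply/bigmax_leqP => x /deg_lt; lia.
lia.
Qed.

Definition chrom_ineq S H :=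
  4 * chrom S <= #|S :\: H| + 3 * chrom H + 2 * clique_num S + max_deg S + 1.

Lemma chrom_ineq_remove_stable S H C :
  (forall S' H' : {set T}, #|S'| < #|S| -> H' \subset S' -> chrom_ineq S' H') ->
  S != set0 -> H \subset S -> C \subset S -> stable C ->
  chrom (H :\: C) < chrom H \/ 3 <= #|C :\: H| -> chrom_ineq S H.
Proof.
move=> IH Sne HS CS C_stable progress.
have [I [CI IS I_stable dom]] := exists_maximal_stable CS C_stable.
have Ine : I != set0.
  case/set0Pn: Sne => x xS; apply/set0Pn; have [xI|xI] := boolP (x \in I); first by exists x.
  by have [y yI _] := dom x xS xI; exists y.
have ltS : #|S :\: I| < #|S|.
  by rewrite cardsD (setIidPr IS) -(card_gt0 I) in Ine *; have := subset_leq_card IS; lia.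
have := IH _ _ ltS (setSD I HS).
have := chrom_stable_setD S I_stable.
have := chromS (setDS H CI); have := chromS (subsetDl H C).
have : #|(S :\: I) :\: (H :\: I)| + #|C :\: H| <= #|S :\: H|.
  have -> : (S :\: I) :\: (H :\: I) = (S :\: H) :\: I.
    by apply/setP => x; rewrite !inE; case: (x \in I).
  rewrite -[leqRHS](cardsID I) addnC leq_add2r subset_leq_card //.
  by apply/subsetP => x; rewrite !inE => /andP [-> xC]; rewrite (subsetP CS x xC) (subsetP CI x xC).
have := clique_numS (subsetDl S I).
rewrite /chrom_ineq; have [S'0|S'ne] := eqVneq (S :\: I) set0.
  have : chrom (S :\: I) = 0 by rewrite /chrom S'0 eqxx.
  by case: progress; lia.
by have := max_deg_setD_dominating IS S'ne dom; case: progress; lia.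
Qed.

Lemma subset_chrom_ineq S H : H \subset S -> chrom_ineq S H.
Proof.
elim: {S}#|S|.+1 {-2}S (ltnSn #|S|) H => // n IHn S ltSn H HS.
have IH S' H' : #|S'| < #|S| -> H' \subset S' -> chrom_ineq S' H'.
  by move=> ltS'; apply: IHn; apply: leq_trans ltS' _.
have [->|Sne] := eqVneq S set0; first by rewrite /chrom_ineq /chrom eqxx.
have [H0|Hne] := eqVneq H set0.
  have [/existsP [C /and3P [CS C_stable C3]]|no_big_stable] :=
    boolP [exists C : {set T}, [&& C \subset S, stable C & 2 < #|C|]].
    by apply: (chrom_ineq_remove_stable IH Sne HS CS C_stable); right; rewrite H0 setD0.
  have small_stable C : C \subset S -> stable C -> #|C| <= 2.
    move=> CS C_stable; rewrite leqNgt; apply: contra no_big_stable => C3.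
    by apply/existsP; exists C; rewrite CS C_stable.
  have := chrom_small_stable small_stable.
  by rewrite /chrom_ineq H0 setD0 {3}/chrom eqxx; lia.
have [g pg bg] := chrom_colouring H.
have [k chromH] : exists k, chrom H = k.+1.
  case/set0Pn: Hne => x xH; exists (chrom H).-1; rewrite prednK //.
  exact: leq_ltn_trans (bg x xH).
pose C := [set x in H | g x == k].
apply: (chrom_ineq_remove_stable (C := C) IH Sne HS).
- by apply/subsetP => x; rewrite inE => /andP [/(subsetP HS)].
- apply/stableP => x y; rewrite !inE => /andP [xH /eqP gx] /andP [yH /eqP gy].
  by apply/negP => /(pg x y xH yH); rewrite gx gy.
- left; rewrite chromH ltnS.
  apply: (chrom_min (f := g)) => [x y /setDP [xH _] /setDP [yH _]|x /setDP [xH]]; first exact: pg.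
  by rewrite inE xH /= => gx; have := bg x xH; rewrite chromH ltnS leq_eqVlt (negbTE gx).
Qed.

Lemma clique_num_setT : clique_num setT = omega e.
Proof. by apply: eq_bigl => C; rewrite subsetT. Qed.

Lemma max_deg_setT : max_deg setT = Delta e.
Proof.
apply: eq_big => [x|x _]; first by rewrite inE.
by apply: eq_card => y; rewrite !inE.
Qed.

Lemma card_le_delta_compl : #|T| <= delta_compl e + Delta e + 1.
Proof.
rewrite /delta_compl; elim/big_ind: _ => [||x _]; first by rewrite -addnA leq_addr.
  by move=> a b; lia.
have := card_nbrs_nonnbrs (in_setT x); have := max_deg_max (in_setT x).
rewrite max_deg_setT cardsT.
have -> : nonnbrs setT x = [set y | (y != x) && ~~ e x y] by apply/setP => y; rewrite !inE.
have -> : [set y in setT | e x y] = [set y | e x y] by apply/setP => y; rewrite !inE.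
lia.
Qed.

Lemma chi_excess_bound H : H != set0 ->
  4 * chi e + #|H| <= 2 * omega e + 2 * Delta e + 2 + delta_compl e + 3 * chi_on e H.
Proof.
move=> Hne; have Tne : [set: T] != set0.
  by case/set0Pn: Hne => x _; apply/set0Pn; exists x; rewrite inE.
have := subset_chrom_ineq (subsetT H); rewrite /chrom_ineq /chrom (negbTE Tne) (negbTE Hne).
rewrite clique_num_setT max_deg_setT.
have : #|[set: T] :\: H| + #|H| = #|T|.
  by rewrite -cardsT -(cardsID H setT) (setIidPr (subsetT H)) addnC.
by have := card_le_delta_compl; rewrite /chi; lia.
Qed.

Lemma eta_le : 0 < #|T| ->
  (eta e <= (2 * omega e + 2 * Delta e + 2 + delta_compl e)%:Z - (4 * chi e)%:Z)%R.
Proof.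
move=> T_ne; rewrite /eta; elim/big_ind: _ => [|x y hx hy|H Hne]; last 2 first.
- by rewrite ge_max hx hy.
- by have := chi_excess_bound Hne; lia.
have Tne : [set: T] != set0 by case/card_gt0P: T_ne => x _; apply/set0Pn; exists x; rewrite inE.
have := chi_excess_bound Tne; have := chi_on_le_card setT.
by rewrite cardsT /chi; lia.
Qed.

End InducedSubgraphs.

Local Open Scope ring_scope.

Theorem corollary12 (T : finType) (e : rel T)
  (e_sym : symmetric e) (e_irr : irreflexive e) (T_ne : (0 < #|T|)%N) :
  ((chi e)%:Q <=
     (1 / 2) * ((omega e)%:Q + (Delta e)%:Q + 1)
     + ((delta_compl e)%:Q - (eta e)%:~R) / 4).
Proof.
have := eta_le e_sym e_irr T_ne; rewrite -(ler_int rat).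
rewrite !rmorphB !rmorphD /= rmorph0.
lra.
Qed.
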